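(* Let $X$ be a compact metric space, $T:X\to X$ a surjective continuous map which is not one-to-one, and $f\in C(X,\mathbb{R})$. Then for each finite open cover $\mathcal{U}$ of $X$, each compact $K\subseteq X$ and all $n,m\in\mathbb{N}$, $$P_n(T,f\circ T^m,T^{-m}\mathcal{U},T^{-m}K)=P_n(T,f,\mathcal{U},K).$$
   Context: For $g\in C(X,\mathbb{R})$, $g_n=\sum_{i=0}^{n-1}g\circ T^i$. $\mathcal{C}_X$ = finite Borel covers of $X$; $\mathcal{V}\succeq\mathcal{W}$ means each element of $\mathcal{V}$ lies in some element of $\mathcal{W}$; $\mathcal{W}_0^{n-1}=\bigvee_{i=0}^{n-1}T^{-i}\mathcal{W}$; $T^{-m}\mathcal{U}=\{T^{-m}U:U\in\mathcal{U}\}$ and $T^{-m}K$ denotes the preimage. $P_n(T,g,\mathcal{W},L)=\inf\{\sum_{V\in\mathcal{V}}\sup_{x\in V\cap L}\exp g_n(x):\mathcal{V}\in\mathcal{C}_X,\ \mathcal{V}\succeq\mathcal{W}_0^{n-1}\}$, terms with $V\cap L=\emptyset$ contributing $0$. *)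

From HB Require Import structures.
From mathcomp Require Import all_boot all_order all_algebra.
From mathcomp Require Import all_classical all_reals all_analysis.
Set Implicit Arguments. Unset Strict Implicit. Unset Printing Implicit Defensive.
Import Order.TTheory GRing.Theory Num.Theory numFieldTopology.Exports.
Local Open Scope classical_set_scope.
Local Open Scope ring_scope.

Definition borel_set (X : topologicalType) (A : set X) : Prop :=
  <<s [set: X], open >> A.

Definition is_finite_cover (X : Type) (P : set X -> Prop) (V : set (set X)) : Prop :=
  [/\ finite_set V, (forall A, V A -> P A) & \bigcup_(A in V) A = [set: X]].

Definition bsum (X : Type) (R : realType) (T : X -> X) (g : X -> R) (n : nat) (x : X) : R :=
  \sum_(0 <= i < n) g (iter i T x).

Definition preim_family (X : Type) (S : X -> X) (U : set (set X)) : set (set X) :=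
  [set S @^-1` A | A in U].

Definition join_iter (X : Type) (T : X -> X) (W : set (set X)) (n : nat) : set (set X) :=
  [set B | exists Ws : nat -> set X, (forall i, (i < n)%N -> W (Ws i)) /\
           B = \bigcap_(i in [set i | (i < n)%N]) (iter i T @^-1` Ws i)].

Definition refines (X : Type) (V W : set (set X)) : Prop :=
  forall A, V A -> exists2 B, W B & A `<=` B.

Definition supterm (X : Type) (R : realType) (T : X -> X) (g : X -> R) (n : nat)
  (L V : set X) : R :=
  if `[< V `&` L !=set0 >] then sup [set expR (bsum T g n x) | x in V `&` L] else 0.

Definition Pn (X : topologicalType) (R : realType) (T : X -> X) (g : X -> R)
  (W : set (set X)) (L : set X) (n : nat) : R :=
  inf [set (\sum_(V \in VV) supterm T g n L V)%R | VV in
        [set VV : set (set X) | is_finite_cover (@borel_set X) VV /\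
                                refines VV (join_iter T W n)]].

From HB Require Import structures.
From mathcomp Require Import all_boot all_order all_algebra.
From mathcomp Require Import all_classical all_reals all_analysis.
Import Order.TTheory GRing.Theory Num.Theory numFieldTopology.Exports.
Local Open Scope classical_set_scope.
Local Open Scope ring_scope.

(* Both sides are infima of sums over Borel covers, so it suffices to trade any
   admissible cover at level k' (for f o T^k', T^{-k'}U, T^{-k'}K) for one at
   level k with no larger sum.  Each element B of the given cover lies in
   T^{-k'}A_B for some A_B in the join of U.  Keep from A_B only the points
   outside K or where exp f_n is at most the sup-term s_B of B; this set C_B is
   Borel, and the sets T^{-k}C_B refine the join of T^{-k}U, have sup-terms at
   most s_B, and cover X because T^k' is onto.  Pulling back, rather than
   pushing B forward (images of Borel sets need not be Borel), is what keeps
   the new cover Borel. *)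

Section borel_set.
Context {X : topologicalType}.
Implicit Types A B : set X.

Lemma borel_set_open A : open A -> borel_set A.
Proof. by move=> oA; apply: sub_gen_smallest. Qed.

Lemma borel_setC A : borel_set A -> borel_set (~` A).
Proof. by rewrite -setTD; exact: sigma_algebraCD. Qed.

Lemma borel_set_closed A : closed A -> borel_set A.
Proof.
move=> cA; rewrite -[A]setCK; apply: borel_setC; apply: borel_set_open.
exact: closed_openC.
Qed.

Lemma borel_setU A B : borel_set A -> borel_set B -> borel_set (A `|` B).
Proof.
move=> bA bB; rewrite -bigcup2E.
apply: (@sigma_algebra_bigcup _ setT) => -[|[|i]] //=.
exact: sigma_algebra0.
Qed.

Lemma borel_setI A B : borel_set A -> borel_set B -> borel_set (A `&` B).
Proof.
move=> bA bB; rewrite -[_ `&` _]setCK setCI.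
by apply: borel_setC; apply: borel_setU; apply: borel_setC.
Qed.

Lemma borel_set_bigcap (P : set nat) (F : nat -> set X) :
  (forall i, P i -> borel_set (F i)) -> borel_set (\bigcap_(i in P) F i).
Proof.
move=> bF; rewrite -[\bigcap_(i in P) F i]setCK setC_bigcap bigcup_mkcond.
apply: borel_setC; apply: (@sigma_algebra_bigcup _ setT) => i.
case: ifPn => [/set_mem Pi|_]; first by apply: borel_setC; exact: bF.
exact: sigma_algebra0.
Qed.

End borel_set.

Section iterates.
Context {X : Type} {T : X -> X}.

Lemma iter_comm i k x : iter i T (iter k T x) = iter k T (iter i T x).
Proof. by rewrite -!iterD addnC. Qed.

Lemma iter_surjective k : (forall y, exists x, T x = y) ->
  forall y, exists x, iter k T x = y.
Proof.
move=> sT; elim: k => [|k IHk] y; first by exists y.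
have [z <-] := sT y; have [x <-] := IHk z; by exists x; rewrite iterS.
Qed.

Lemma bsum_iter (R : realType) (g : X -> R) k n x :
  bsum T (g \o iter k T) n x = bsum T g n (iter k T x).
Proof. by apply: eq_bigr => i _ /=; rewrite iter_comm. Qed.

Lemma join_iter_preim k n (U : set (set X)) A : join_iter T U n A ->
  join_iter T (preim_family (iter k T) U) n (iter k T @^-1` A).
Proof.
move=> [Ws [UWs ->]]; exists (fun i => iter k T @^-1` Ws i); split.
  by move=> i /UWs UWi; exists (Ws i).
apply/seteqP; split => x /= Hx i ni; have := Hx i ni;
  by rewrite /preimage /= iter_comm.
Qed.

Lemma join_iter_preimV k n (U : set (set X)) B :
  join_iter T (preim_family (iter k T) U) n B ->
  exists2 A, join_iter T U n A & B = iter k T @^-1` A.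
Proof.
move=> [Ws [UWs ->]].
have /choice[As HAs] : forall i, exists A,
    (i < n)%N -> U A /\ Ws i = iter k T @^-1` A.
  move=> i; case: (ltnP i n) => [ni|]; last by exists setT.
  by have [A UA eA] := UWs i ni; exists A.
exists (\bigcap_(i in [set i | (i < n)%N]) (iter i T @^-1` As i)).
  by exists As; split => // i ni; exact: (HAs i ni).1.
apply/seteqP; split => x /= Hx i ni; have := Hx i ni;
  by rewrite (HAs i ni).2 /preimage /= iter_comm.
Qed.

End iterates.

Section continuity.
Context {X : topologicalType} {T : X -> X}.
Hypothesis cT : continuous T.

Lemma continuous_iter k : continuous (iter k T).
Proof.
elim: k => [|k IHk] x; first exact: cvg_id.
by apply: continuous_comp; [exact: IHk | exact: cT].
Qed.

Lemma continuous_bsum (R : realType) (g : X -> R) n :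
  continuous g -> continuous (bsum T g n).
Proof.
move=> cg; elim: n => [|n IHn] x.
  have -> : bsum T g 0 = cst 0 by apply/funext => y; rewrite /bsum big_geq.
  exact: cst_continuous.
have -> : bsum T g n.+1 = bsum T g n + (g \o iter n T).
  by apply/funext => y; rewrite /bsum big_nat_recr.
apply: continuousD; first exact: IHn.
by apply: continuous_comp; [exact: continuous_iter | exact: cg].
Qed.

Lemma join_iter_borel n (U : set (set X)) A :
  (forall B, U B -> open B) -> join_iter T U n A -> borel_set A.
Proof.
move=> oU [Ws [UWs ->]]; apply: borel_set_bigcap => i ni; apply: borel_set_open.
by move/continuousP: (continuous_iter i); apply; exact/oU/UWs.
Qed.

End continuity.

Section supterm.
Variables (R : realType) (X : Type) (T : X -> X) (g : X -> R) (n : nat).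
Variable L : set X.

Lemma supterm_ge0 V : 0 <= supterm T g n L V.
Proof.
rewrite /supterm; case: asboolP => [[x VLx]|_] //.
set E := [set expR (bsum T g n y) | y in V `&` L].
have [supE|/sup_out->//] := pselect (has_sup E).
apply: le_trans (sup_upper_bound supE _); last by exists x.
exact/ltW/expR_gt0.
Qed.

Lemma supterm_le V c : 0 <= c ->
  (forall x, V x -> L x -> expR (bsum T g n x) <= c) -> supterm T g n L V <= c.
Proof.
move=> c0 Vc; rewrite /supterm; case: asboolP => [[x VLx]|//].
apply: ge_sup; first by exists (expR (bsum T g n x)), x.
by move=> _ [y [Vy Ly] <-]; exact: Vc.
Qed.

Lemma le_supterm V x : has_ubound (range (expR \o bsum T g n)) -> V x -> L x ->
  expR (bsum T g n x) <= supterm T g n L V.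
Proof.
move=> [M ubM] Vx Lx; rewrite /supterm asboolT; last by exists x.
apply: sup_upper_bound; last by exists x.
split; first by exists (expR (bsum T g n x)), x.
by exists M => _ [y _ <-]; apply: ubM; exists y.
Qed.

End supterm.

Lemma bounded_expR_bsum (R : realType) (X : topologicalType) (T : X -> X)
    (g : X -> R) n :
  compact [set: X] -> continuous T -> continuous g ->
  has_ubound (range (expR \o bsum T g n)).
Proof.
move=> cX cT cg; have [[x _]|X0] := pselect ([set: X] !=set0); last first.
  by exists 0 => y [x _ _]; case: X0; exists x.
have cE : compact (range (expR \o bsum T g n)).
  apply: continuous_compact => //; apply: continuous_subspaceT => y.
  by apply: continuous_comp; [exact: continuous_bsum | exact: continuous_expR].
by have [] := compact_has_sup (ex_intro _ _ (imageT _ x)) cE.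
Qed.

Lemma le_fsbig_image (R : realType) (I J : choiceType) (W : set I)
    (phi : I -> J) (g : J -> R) (g' : I -> R) : finite_set W ->
  (forall B, W B -> g (phi B) <= g' B) -> (forall B, W B -> 0 <= g' B) ->
  \sum_(V \in phi @` W) g V <= \sum_(B \in W) g' B.
Proof.
move=> Wfin le_gg' g'_ge0.
have [->|/set0P[B0 _]] := eqVneq W set0; first by rewrite image_set0 !fsbig_set0.
have /choice[sec secP] : forall V, exists B, (phi @` W) V -> W B /\ phi B = V.
  move=> V; have [[B WB <-]|nV] := pselect ((phi @` W) V); first by exists B.
  by exists B0 => /nV.
have sec_inj : set_inj (phi @` W) sec.
  move=> V V' /set_mem/secP[_ eV] /set_mem/secP[_ eV'] e.
  by rewrite -eV -eV' e.
set P := sec @` (phi @` W).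
have PW : P `<=` W by move=> _ [V /secP[WsV _] <-].
rewrite (eq_fsbigr (fun V => g (phi (sec V)))); last first.
  by move=> V /set_mem/secP[_ ->].
rewrite -(@fsbig_image _ _ _ _ _ _ _ (g \o phi) sec_inj) /=.
apply: (@le_trans _ _ (\sum_(B \in P) g' B)).
  have Pfin : finite_set P by apply/finite_image/finite_image.
  rewrite !fsbig_finite //= big_seq [leRHS]big_seq; apply: ler_sum => B.
  by rewrite in_fset_set // in_setE => /PW; exact: le_gg'.
rewrite [leRHS](fsbigID P) // setIidr // lerDl.
by apply: fsumr_ge0 => B [WB _]; exact: g'_ge0.
Qed.

Lemma inf_eq_coinitial (R : realType) (A B : set R) : has_lbound A ->
  (forall b, B b -> exists2 a, A a & a <= b) ->
  (forall a, A a -> exists2 b, B b & b <= a) -> inf A = inf B.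
Proof.
move=> [l lA] BA AB; have lB : has_lbound B.
  by exists l => b /BA[a /lA la ab]; exact: le_trans ab.
have [[a Aa]|A0] := pselect (A !=set0); last first.
  suff /nonemptyPn-> : ~ (B !=set0) by move/nonemptyPn: A0 ->.
  by case=> b /BA[a Aa _]; apply: A0; exists a.
apply/le_anti/andP; split; apply: lb_le_inf.
- by have [b Bb _] := AB a Aa; exists b.
- move=> b /BA[a' Aa' a'b].
  exact: le_trans (ge_inf (ex_intro _ l lA) Aa') a'b.
- by exists a.
- by move=> a' /AB[b Bb ba']; exact: le_trans (ge_inf lB Bb) ba'.
Qed.

Definition pn_covers {X : topologicalType} (T : X -> X) (W : set (set X)) n :=
  [set VV : set (set X) | is_finite_cover (@borel_set X) VV /\
                          refines VV (join_iter T W n)].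

Definition pn_sums {R : realType} {X : topologicalType} (T : X -> X)
    (g : X -> R) (W : set (set X)) (L : set X) n : set R :=
  [set \sum_(V \in VV) supterm T g n L V | VV in pn_covers T W n].

Lemma pn_sums_ge0 (R : realType) (X : topologicalType) (T : X -> X)
    (g : X -> R) W L n b : pn_sums T g W L n b -> 0 <= b.
Proof. by move=> [VV _ <-]; apply: fsumr_ge0 => V _; exact: supterm_ge0. Qed.

Section shift.
Context {R : realType} {X : topologicalType} {T : X -> X} {f : X -> R}.
Context {U : set (set X)} {K : set X} {n : nat}.
Hypotheses (cX : compact [set: X]) (cT : continuous T)
  (sT : forall y, exists x, T x = y) (cf : continuous f)
  (oU : forall A, U A -> open A) (cK : closed K).

Local Notation shifted_sums k := (pn_sums T (f \o iter k T)
  (preim_family (iter k T) U) (iter k T @^-1` K) n).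

Definition trim_above (A : set X) (c : R) :=
  A `&` (~` K `|` [set y | expR (bsum T f n y) <= c]).

Lemma borel_preim_trim_above k A c : join_iter T U n A ->
  borel_set (iter k T @^-1` trim_above A c).
Proof.
move=> UA; rewrite !preimage_setI preimage_setU -preimage_setC.
have ciT := continuous_iter cT k.
apply: borel_setI; last apply: borel_setU.
- apply: (join_iter_borel cT n (preim_family (iter k T) U)).
    by move=> _ [B UB <-]; move/continuousP: ciT; apply; exact: oU.
  exact: join_iter_preim.
- apply: borel_setC; apply: borel_set_closed.
  exact: (proj1 (continuous_closedP _) ciT _ cK).
have ch : continuous (expR \o bsum T f n \o iter k T).
  move=> x; apply: continuous_comp; first exact: ciT.
  by apply: continuous_comp; [exact: continuous_bsum | exact: continuous_expR].
apply: borel_set_closed.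
exact: (proj1 (continuous_closedP _) ch _ (@closed_le _ c)).
Qed.

Lemma supterm_preim_trim_above k A c : 0 <= c ->
  supterm T (f \o iter k T) n (iter k T @^-1` K) (iter k T @^-1` trim_above A c)
    <= c.
Proof.
move=> c0; apply: supterm_le => // x [_ [//|le_c]] Kx.
by rewrite bsum_iter; exact: le_c.
Qed.

Lemma shifted_sums_dominated k k' b : shifted_sums k' b ->
  exists2 a, shifted_sums k a & a <= b.
Proof.
move=> [W [[Wfin _ Wcov] Wref] <-].
have /choice[As AsP] : forall B, exists A,
    W B -> join_iter T U n A /\ B `<=` iter k' T @^-1` A.
  move=> B; have [WB|] := pselect (W B); last by exists setT.
  have [_ /join_iter_preimV[A UA ->] BA] := Wref B WB.
  by exists A.
pose s B := supterm T (f \o iter k' T) n (iter k' T @^-1` K) B.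
pose phi B := iter k T @^-1` trim_above (As B) (s B).
exists (\sum_(V \in phi @` W) supterm T (f \o iter k T) n (iter k T @^-1` K) V).
  exists (phi @` W) => //; split; [split|].
  - exact: finite_image.
  - by move=> _ [B WB <-]; apply: borel_preim_trim_above; exact: (AsP B WB).1.
  - apply/seteqP; split => // x _.
    have [z zx] := iter_surjective k' sT (iter k T x).
    have [B WB Bz] : (\bigcup_(B in W) B) z by rewrite Wcov.
    exists (phi B); first by exists B.
    split; first by rewrite -zx; exact: (AsP B WB).2.
    have [Kx|] := pselect (K (iter k T x)); last by left.
    right; rewrite /= -zx -bsum_iter.
    apply: le_supterm Bz _; last by rewrite /= zx.
    apply: bounded_expR_bsum => // y.
    by apply: continuous_comp; [exact: continuous_iter | exact: cf].
  - move=> _ [B WB <-]; exists (iter k T @^-1` As B) => [|x []//].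
    by apply: join_iter_preim; exact: (AsP B WB).1.
apply: le_fsbig_image => // B WB; last exact: supterm_ge0.
by apply: supterm_preim_trim_above; exact: supterm_ge0.
Qed.

End shift.

Lemma preim_family_iter0 {X : Type} (T : X -> X) (U : set (set X)) :
  preim_family (iter 0 T) U = U.
Proof. by apply/seteqP; split => [_ [A UA <-] //|A UA]; exists A. Qed.

Theorem lemma5p2 (R : realType) (X : metricType R) (T : X -> X) (f : X -> R) :
  compact [set: X] ->
  continuous T -> (forall y : X, exists x : X, T x = y) -> ~ injective T ->
  continuous f ->
  forall (U : set (set X)) (K : set X) (n m : nat),
    is_finite_cover (@open X) U -> compact K ->
    Pn T (f \o iter m T) (preim_family (iter m T) U) (iter m T @^-1` K) n =
    Pn T f U K n.
Proof.
move=> cX cT sT _ cf U K n m [_ oU _] cK.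
have clK : closed K := compact_closed (@metric_hausdorff R X) cK.
have -> : Pn T f U K n =
    Pn T (f \o iter 0 T) (preim_family (iter 0 T) U) (iter 0 T @^-1` K) n.
  by rewrite preim_family_iter0.
apply: inf_eq_coinitial; first by exists 0 => b /pn_sums_ge0.
- exact: (shifted_sums_dominated cX cT sT cf oU clK m 0).
- exact: (shifted_sums_dominated cX cT sT cf oU clK 0 m).
Qed.
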